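(* Let the system $x^+=f(x,u)$ (as in the context) be flat with flat output $y$ and parameterization $x=F_x(y_{[-R_1,R_2-1]})$, $u=F_u(y_{[-R_1,R_2]})$. Then the submatrices $\partial_{y_{[R_2-1]}}F_x$ (the Jacobian of $F_x$ with respect to the variables $y^j_{[r_{2,j}-1]}$, $j=1,\dots,m$) and $\partial_{y_{[R_2]}}F_u$ (the Jacobian of $F_u$ with respect to the variables $y^j_{[r_{2,j}]}$, $j=1,\dots,m$) have the same (generic) rank.
   Context: Consider a nonlinear time-invariant discrete-time system $x^{i,+}=f^i(x,u)$, $i=1,\dots,n$, with $x\in\mathbb{R}^n$, $u\in\mathbb{R}^m$, smooth $f$, $\operatorname{rank}(\partial_u f)=m$, and $\operatorname{rank}(\partial_{(x,u)}f)=n$. Let $g(x,u)$ be $m$ smooth functions such that $(x,u)\mapsto(f(x,u),g(x,u))$ is a local diffeomorphism, and $\zeta=g(x,u)$. Notation: $w_{[\alpha]}$ is the $\alpha$-th forward shift, $w_{[-\alpha]}$ the $\alpha$-th backward shift; for a multi-index $R=(r_1,\dots,r_m)$ and $y=(y^1,\dots,y^m)$, $y_{[R]}$ denotes $(y^1_{[r_1]},\dots,y^m_{[r_m]})$ and $y_{[-S_1,S_2]}$ denotes all $y^j_{[i]}$ with $-s_{1,j}\le i\le s_{2,j}$. Flatness: the system is flat around an equilibrium if there exist an $m$-tuple $y=\varphi(\zeta_{[-Q_1,-1]},x,u,u_{[1,Q_2]})$ (flat output) and smooth maps $x=F_x(y_{[-R_1,R_2-1]})$, $u=F_u(y_{[-R_1,R_2]})$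 (the uniquely determined parameterization) establishing locally a one-to-one correspondence between system trajectories and arbitrary sequences $y(k)\in\mathbb{R}^m$; in particular the identity $\delta(F_x)=f(F_x,F_u)$ holds, where $\delta$ is the forward shift operator acting on functions of $y$ and its shifts (replacing each $y_{[i]}$ by $y_{[i+1]}$). *)

From HB Require Import structures.
From mathcomp Require Import all_boot all_order all_algebra.
From mathcomp Require Import all_classical all_reals all_analysis.
Set Implicit Arguments. Unset Strict Implicit. Unset Printing Implicit Defensive.
Import Order.TTheory GRing.Theory Num.Theory.
Import numFieldNormedType.Exports.
Local Open Scope ring_scope.

Section Defs.
Variable R : realType.

Fixpoint iter_dir (V W : normedModType R) (vs : seq V) (F : V -> W) : V -> W :=
  match vs with
  | [::] => F
  | v :: vs' => fun x => 'D_v (iter_dir vs' F) x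
  end.

Definition smooth (V W : normedModType R) (F : V -> W) : Prop :=
  forall vs : seq V,
    continuous (iter_dir vs F) /\ forall x v, derivable (iter_dir vs F) x v.

Definition germ_generic_rank (V : normedModType R) (p q : nat)
    (A : V -> 'M[R]_(p, q)) (x0 : V) (r : nat) : Prop :=
  (\forall x \near x0, (\rank (A x) <= r)%N) /\
  (forall U, nbhs x0 U -> exists2 x, U x & \rank (A x) = r).

Definition jac_u (n m : nat) (f : 'rV[R]_n -> 'rV[R]_m -> 'rV[R]_n)
    (x : 'rV[R]_n) (u : 'rV[R]_m) : 'M[R]_(n, m) :=
  \matrix_(i < n, j < m) ('D_(delta_mx 0 j) (f x) u) 0 i.
Definition jac_x (n m : nat) (f : 'rV[R]_n -> 'rV[R]_m -> 'rV[R]_n)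
    (x : 'rV[R]_n) (u : 'rV[R]_m) : 'M[R]_(n, n) :=
  \matrix_(i < n, j < n) ('D_(delta_mx 0 j) (fun x' => f x' u) x) 0 i.

End Defs.

(* Given multi-indices r1, r2 : 'I_m -> nat,
   a finite stretch of an m-dimensional sequence y is stored in a matrix
   Y : 'M_(m, (wlen r1 r2).+1), the entry Y j k standing for y^j_[k - woff r1],
   i.e. y^j_[i] is stored in column woff r1 + i.  Columns range over
   -woff r1 <= i <= max r2, which contains every y^j_[i], -r1_j-1 <= i <= r2_j. *)
Definition woff (m : nat) (r1 : 'I_m -> nat) : nat := (\max_(j < m) r1 j).+1.
Definition wlen (m : nat) (r1 r2 : 'I_m -> nat) : nat := woff r1 + \max_(j < m) r2 j.

(* forward shift delta: (shift Y) stores y_[i+1] where Y stores y_[i]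
   (the last column, never used below, is filled arbitrarily) *)
Definition yshift (R : realType) (m L : nat) (Y : 'M[R]_(m, L.+1)) : 'M[R]_(m, L.+1) :=
  \matrix_(j < m, k < L.+1) Y j (inord k.+1).

Definition depends_only_on (R : realType) (m L : nat) (T : Type)
    (F : 'M[R]_(m, L) -> T) (P : 'I_m -> 'I_L -> bool) : Prop :=
  forall Y Y' : 'M[R]_(m, L), (forall j k, P j k -> Y j k = Y' j k) -> F Y = F Y'.

Definition jac_cols (R : realType) (m L p : nat) (F : 'M[R]_(m, L) -> 'rV[R]_p)
    (c : 'I_m -> 'I_L) (Y : 'M[R]_(m, L)) : 'M[R]_(p, m) :=
  \matrix_(i < p, j < m) ('D_(delta_mx j (c j)) F Y) 0 i.

From HB Require Import structures.
From mathcomp Require Import all_boot all_order all_algebra.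
From mathcomp Require Import all_classical all_reals all_analysis.
From mathcomp Require Import zify.
Import Order.TTheory GRing.Theory Num.Theory.
Import numFieldNormedType.Exports.
Local Open Scope ring_scope.
Local Open Scope classical_set_scope.

(* Differentiate the identity delta(F_x) = f(F_x, F_u) with respect to the
   variable y^j_[r_{2,j}].  F_x does not depend on it, so the right-hand side
   only sees F_u and the chain rule gives d_u f * (column j of d F_u / d y_[R2]),
   while the left-hand side is column j of d F_x / d y_[R2-1], taken at the
   shifted point.  Hence  (d F_x / d y_[R2-1]) o delta = d_u f * d F_u / d y_[R2]
   near the equilibrium, and as d_u f has full column rank both Jacobians have
   the same rank at corresponding points.  The shift fixes the constant
   equilibrium sequence and has a continuous right inverse, so it preserves
   generic ranks there.  Since smoothness is phrased with directional
   derivatives, differentiability of f(x, .) is recovered from the continuity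
   of its partial derivatives by the mean value theorem. *)

Section directional_derivatives.
Context {R : realType}.

Section affine_reparametrization.
Context {U V W : normedModType R} (F : U -> W) {S : V -> U} {a v : V} {w : U}.
Hypothesis S_line : forall h : R, S (h *: v + a) = h *: w + S a.

Let difference_quotientE :
  (fun h : R => h^-1 *: (((F \o S) \o shift a) (h *: v) - (F \o S) a))
  = (fun h : R => h^-1 *: ((F \o shift (S a)) (h *: w) - F (S a))).
Proof. by apply/funext => h /=; rewrite S_line. Qed.

Lemma derivable_comp_affine : derivable (F \o S) a v = derivable F (S a) w.
Proof. by rewrite /derivable difference_quotientE. Qed.

Lemma derive_comp_affine : 'D_v (F \o S) a = 'D_w F (S a).
Proof. by rewrite /derive difference_quotientE. Qed.

End affine_reparametrization.

Section line.
Context {U W : normedModType R} (g : U -> W) (a e : U) (s : R).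

Let line_affine (h : R) :
  (fun t : R => t *: e + a) (h *: 1 + s) = h *: e + (s *: e + a).
Proof. by rewrite /= addrA -scalerDl [h *: 1]mulr1. Qed.

Lemma derivable_line :
  derivable (fun t : R => g (t *: e + a)) s 1 = derivable g (s *: e + a) e.
Proof. exact: (derivable_comp_affine g (S := fun t : R => t *: e + a) line_affine). Qed.

Lemma derive_line : 'D_1 (fun t : R => g (t *: e + a)) s = 'D_e g (s *: e + a).
Proof. exact: (derive_comp_affine g (S := fun t : R => t *: e + a) line_affine). Qed.

End line.

Lemma derive_eq_on_line (U W : normedModType R) (F G : U -> W) a v :
  (forall h : R, F (h *: v + a) = G (h *: v + a)) -> 'D_v F a = 'D_v G a.
Proof.
move=> FG; have := derive_line F a v 0; have := derive_line G a v 0.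
by rewrite scale0r add0r => <- <-; rewrite (funext FG).
Qed.

Lemma derive_comp_differentiable (U V W : normedModType R)
    (Phi : V -> U) (G : U -> W) a v :
  derivable Phi a v -> differentiable G (Phi a) ->
  'D_v (G \o Phi) a = 'd G (Phi a) ('D_v Phi a).
Proof.
move=> dPhi dG; pose gam t := Phi (t *: v + a).
have gam0 : gam 0 = Phi a by rewrite /gam scale0r add0r.
have dgam : differentiable gam 0.
  by apply/derivable1_diffP; rewrite derivable_line scale0r add0r.
have dGgam : differentiable G (gam 0) by rewrite gam0.
have := derive_line (G \o Phi) a v 0; rewrite scale0r add0r => <-.
rewrite (_ : (fun t => (G \o Phi) (t *: v + a)) = G \o gam) //.
rewrite deriveE; last exact: differentiable_comp.
rewrite diff_comp // /= -(deriveE (1 : R) dgam) gam0 /gam derive_line.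
by rewrite scale0r add0r.
Qed.

Lemma derive_comp_jacobian (V : normedModType R) m n
    (Phi : V -> 'rV[R]_m) (G : 'rV[R]_m -> 'rV[R]_n) a v :
  derivable Phi a v -> differentiable G (Phi a) ->
  'D_v (G \o Phi) a = 'D_v Phi a *m 'J G (Phi a).
Proof. by move=> dPhi dG; rewrite derive_comp_differentiable // mul_rV_lin1. Qed.

Lemma jac_uE n m (f : 'rV[R]_n -> 'rV[R]_m -> 'rV[R]_n) x u :
  differentiable (f x) u -> jac_u f x u = ('J (f x) u)^T.
Proof. by move=> dfx; apply/matrixP => i j; rewrite !mxE deriveE. Qed.

Lemma MVT_origin (phi dphi : R -> R) (b : R) :
  (forall x : R, is_derive x (1 : R) phi (dphi x)) ->
  exists2 c, `|c| <= `|b| & phi b - phi 0 = dphi c * b.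
Proof.
move=> dphiP.
have phi_cont a c : {within `[a, c], continuous phi}.
  apply: continuous_subspaceT => x; apply: differentiable_continuous.
  by apply/derivable1_diffP; have [] := dphiP x.
have [b_ge0|b_lt0] := leP 0 b.
  have [c] := MVT_segment b_ge0 (fun x _ => dphiP x) (phi_cont 0 b).
  rewrite in_itv /= subr0 => /andP[c_ge0 c_le] ->; exists c => //.
  by rewrite !ger0_norm // (le_trans c_ge0).
have [c] := MVT_segment (ltW b_lt0) (fun x _ => dphiP x) (phi_cont b 0).
rewrite in_itv /= sub0r => /andP[b_le c_le0] E; exists c.
  by rewrite !ler0_norm ?(ltW b_lt0) // lerN2.
by apply/eqP; rewrite -opprB E mulrN opprK.
Qed.

Lemma line_increment_le (U : normedModType R) (g : U -> R) a e (t d c : R) :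
  (forall s, derivable g (s *: e + a) e) ->
  (forall s, `|s| <= `|t| -> `|'D_e g (s *: e + a) - d| <= c) ->
  `|g (t *: e + a) - g a - t * d| <= `|t| * c.
Proof.
move=> dg Dg_near.
have dlineP (s : R) :
    is_derive s (1 : R) (fun s : R => g (s *: e + a)) ('D_e g (s *: e + a)).
  by apply: DeriveDef; rewrite ?derivable_line ?derive_line.
have [s s_le] := MVT_origin _ _ t dlineP.
rewrite scale0r add0r => ->.
by rewrite [t * d]mulrC -mulrBl normrM mulrC ler_wpM2l // Dg_near.
Qed.

Lemma mx_norm_entry_le {p q} (M : 'M[R]_(p, q)) i j : `|M i j| <= `|M|.
Proof.
rewrite [`|M|]mx_normrE.
exact: (le_bigmax _ (fun ij : 'I_p * 'I_q => `|M ij.1 ij.2|) (i, j)).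
Qed.

Lemma mx_norm_le_entries {p q} (M : 'M[R]_(p, q)) c :
  0 <= c -> (forall i j, `|M i j| <= c) -> `|M| <= c.
Proof. by move=> c_ge0 Mc; rewrite [`|M|]mx_normrE; apply: bigmax_le => // -[i j]. Qed.

Section partial_derivatives.
Context {m : nat}.
Implicit Types (h : 'rV[R]_m) (g : 'rV[R]_m -> R).

Definition rV_prefix k h : 'rV[R]_m := \row_l (if (l < k)%N then h 0 l else 0).

Lemma rV_prefix0 h : rV_prefix 0 h = 0.
Proof. by apply/rowP => l; rewrite !mxE. Qed.

Lemma rV_prefix_full h : rV_prefix m h = h.
Proof. by apply/rowP => l; rewrite !mxE ltn_ord. Qed.

Lemma rV_prefixS (k : 'I_m) h :
  rV_prefix k.+1 h = h 0 k *: delta_mx 0 k + rV_prefix k h.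
Proof.
apply/rowP => l; rewrite !mxE eqxx /= ltnS leq_eqVlt -val_eqE /=.
by case: eqP => [/val_inj ->|_]; rewrite /= ?ltnn ?mulr1 ?addr0 ?mulr0 ?add0r.
Qed.

Lemma norm_rV_prefix_le (k : 'I_m) h (s : R) :
  `|s| <= `|h 0 k| -> `|s *: delta_mx 0 k + rV_prefix k h| <= `|h|.
Proof.
move=> s_le; apply: mx_norm_le_entries => // i l; rewrite (ord1 i) !mxE eqxx /=.
have [->|/= lk] := eqVneq l k.
  by rewrite ltnn mulr1 addr0 (le_trans s_le) // mx_norm_entry_le.
by rewrite mulr0 add0r; case: ifP => _; rewrite ?normr0 ?mx_norm_entry_le.
Qed.

Lemma prefix_increment_le g u h (k : 'I_m) (d c : R) :
  (forall a, derivable g a (delta_mx 0 k)) ->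
  (forall z, `|z - u| <= `|h| -> `|'D_(delta_mx 0 k) g z - d| <= c) ->
  `|g (rV_prefix k.+1 h + u) - g (rV_prefix k h + u) - h 0 k * d| <= `|h| * c.
Proof.
move=> dg Dg_near.
have c_ge0 : 0 <= c by apply: le_trans (Dg_near u _); rewrite ?subrr ?normr0.
rewrite rV_prefixS -(addrA (h 0 k *: _)); apply: (@le_trans _ _ (`|h 0 k| * c)).
  apply: line_increment_le => // s s_le; apply: Dg_near.
  by rewrite addrA addrK norm_rV_prefix_le.
by rewrite ler_wpM2r // mx_norm_entry_le.
Qed.

Lemma partials_expansion_le g u (eps : R) :
  (forall k a, derivable g a (delta_mx 0 k)) ->
  (forall k, {for u, continuous ('D_(delta_mx 0 k) g)}) -> 0 < eps ->
  \forall h \near 0, `|g (h + u) - g u - \sum_k h 0 k * 'D_(delta_mx 0 k) g u|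
                      <= eps * `|h|.
Proof.
move=> dg Dg_cont eps_gt0; pose e := eps / m.+1%:R.
have e_gt0 : 0 < e by rewrite divr_gt0.
have /nbhs_normP[r /= r_gt0 Dg_near] : \forall z \near u,
    forall k, `|'D_(delta_mx 0 k) g z - 'D_(delta_mx 0 k) g u| <= e.
  apply: (@filter_forall _ _ (fun k z =>
    `|'D_(delta_mx 0 k) g z - 'D_(delta_mx 0 k) g u| <= e) _ (nbhs_filter u)) => k.
  by apply: filterS (cvgr_dist_le _ _ (Dg_cont k) _ e_gt0) => z; rewrite distrC.
near=> h.
have h_lt : `|h| < r by near: h; exact: (@nbhs0_lt _ 'rV[R]_m _ r_gt0).
pose G k := g (rV_prefix k h + u).
have -> : g (h + u) - g u = \sum_(k < m) (G k.+1 - G k).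
  rewrite -(big_mkord xpredT (fun k => G k.+1 - G k)) telescope_sumr //.
  by rewrite /G rV_prefix_full rV_prefix0 add0r.
have step_le (k : 'I_m) :
    `|G k.+1 - G k - h 0 k * 'D_(delta_mx 0 k) g u| <= `|h| * e.
  apply: prefix_increment_le (dg k) _ => z z_le; apply: (Dg_near z).
  by rewrite /ball_ /= distrC (le_lt_trans z_le).
rewrite -sumrB; apply: le_trans (ler_norm_sum _ _ _) _.
apply: le_trans (ler_sum _ (fun k _ => step_le k)) _.
rewrite sumr_const card_ord -mulr_natr -mulrA [eps * _]mulrC ler_wpM2l //.
by rewrite /e mulrAC ler_pdivrMr ?ltr0Sn // ler_pM2l // ler_nat.
Unshelve. all: by end_near.
Qed.

Lemma differentiable_partials g u :
  (forall k a, derivable g a (delta_mx 0 k)) ->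
  (forall k, {for u, continuous ('D_(delta_mx 0 k) g)}) ->
  differentiable g u.
Proof.
move=> dg Dg_cont; pose D k := 'D_(delta_mx 0 k) g u.
pose L h := \sum_k h 0 k * D k.
have L_linear : linear L.
  move=> a x y; rewrite /L scaler_sumr -big_split /=; apply: eq_bigr => k _.
  by rewrite !mxE mulrDl -mulrA.
pose dL : {linear 'rV[R]_m -> R} :=
  HB.pack L (GRing.isLinear.Build _ _ _ _ _ L_linear).
have L_le h : `|L h| <= (\sum_k `|D k|) * `|h|.
  rewrite mulr_suml; apply: le_trans (ler_norm_sum _ _ _) _.
  by apply: ler_sum => k _; rewrite normrM mulrC ler_wpM2l ?mx_norm_entry_le.
have dL_cont : continuous dL.
  apply/bounded_linear_continuous/linear_boundedP.
  have D_real : \sum_k `|D k| \is Num.real by rewrite realE sumr_ge0.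
  apply: filterS (nbhs_pinfty_ge D_real) => c D_le h.
  exact: le_trans (L_le h) (ler_wpM2r _ D_le).
have dL_expansion : g \o shift u = cst (g u) + dL +o_ 0 id.
  apply/eqaddoP => eps eps_gt0.
  apply: filterS (partials_expansion_le _ _ _ dg Dg_cont eps_gt0) => h.
  by rewrite /= opprD addrA.
apply/diff_locallyP; rewrite (diff_unique dL_cont dL_expansion); split => //.
Qed.

Lemma differentiable_rV_partials n (G : 'rV[R]_m -> 'rV[R]_n) u :
  (forall k a, derivable G a (delta_mx 0 k)) ->
  (forall k, {for u, continuous ('D_(delta_mx 0 k) G)}) ->
  differentiable G u.
Proof.
move=> dG DG_cont.
have -> : G = \sum_(i < n) (fun w => G w 0 i *: delta_mx 0 i).
  by rewrite fct_sumE; apply/funext => w; rewrite [LHS]row_sum_delta.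
apply: differentiable_sum => i; apply: differentiableZl.
apply: differentiable_partials => [k a|k].
  exact: (derivable_mxP _ _ _).1 (dG k a) 0 i.
rewrite (_ : 'D_(delta_mx 0 k) _ = (fun M : 'rV[R]_n => M 0 i) \o 'D_(delta_mx 0 k) G).
  by apply: continuous_comp; [exact: DG_cont | exact: coord_continuous].
by apply/funext => w /=; rewrite derive_mx ?mxE.
Qed.

End partial_derivatives.

Lemma differentiable_smooth_section {n m}
    (f : 'rV[R]_n -> 'rV[R]_m -> 'rV[R]_n) x u :
  smooth (fun p : 'rV[R]_n * 'rV[R]_m => f p.1 p.2) -> differentiable (f x) u.
Proof.
move=> f_smooth; pose P (p : 'rV[R]_n * 'rV[R]_m) := f p.1 p.2.
pose S w : 'rV[R]_n * 'rV[R]_m := (x, w).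
have S_line e w (h : R) : S (h *: e + w) = h *: (0, e) + S w.
  by rewrite /S; congr pair; rewrite /= scaler0 add0r.
apply: differentiable_rV_partials => [k w|k].
  change (derivable (P \o S) w (delta_mx 0 k)).
  by rewrite (derivable_comp_affine P (S_line _ _)); exact: (f_smooth [::]).2.
have -> : 'D_(delta_mx 0 k) (f x) = 'D_(0, delta_mx 0 k) P \o S.
  by apply/funext => w; exact: (derive_comp_affine P (S_line _ w)).
apply: continuous_comp; last exact: (f_smooth [:: (0, delta_mx 0 k)]).1.
exact/differentiable_continuous/differentiable_pair.
Qed.

Lemma derive_shift_dynamics {U : normedModType R} {n m}
    {f : 'rV[R]_n -> 'rV[R]_m -> 'rV[R]_n} {Fx : U -> 'rV[R]_n} {Fu : U -> 'rV[R]_m}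
    {S : U -> U} {Y E : U} :
  (forall (h : R) A B, S (h *: A + B) = h *: S A + S B) ->
  (\forall Z \near Y, Fx (S Z) = f (Fx Z) (Fu Z)) ->
  (forall h : R, Fx (h *: E + Y) = Fx Y) ->
  derivable Fu Y E -> differentiable (f (Fx Y)) (Fu Y) ->
  'D_(S E) Fx (S Y) = 'D_E Fu Y *m 'J (f (Fx Y)) (Fu Y).
Proof.
move=> S_linear dynamics Fx_const dFu df.
rewrite -(derive_comp_affine Fx (fun h => S_linear h E Y)).
rewrite (near_eq_derive _ dynamics) (@derive_eq_on_line _ _ _ (f (Fx Y) \o Fu)).
  exact: derive_comp_jacobian.
by move=> h; rewrite /= Fx_const.
Qed.

End directional_derivatives.

Section rank_germs.
Context {R : realType} {V : normedModType R}.

Lemma mxrankM_colfull n m p (J : 'M[R]_(n, m)) (B : 'M[R]_(m, p)) :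
  \rank J = m -> \rank (J *m B) = \rank B.
Proof.
move=> J_full; rewrite -mxrank_tr trmx_mul mxrankMfree ?mxrank_tr //.
by rewrite /row_free mxrank_tr J_full.
Qed.

Lemma germ_generic_rank_transfer {p q p' q'} (A : V -> 'M[R]_(p, q))
    (B : V -> 'M[R]_(p', q')) x0 r :
  (\forall x \near x0, \rank (A x) = \rank (B x)) ->
  germ_generic_rank A x0 r -> germ_generic_rank B x0 r.
Proof.
move=> AB [A_le A_eq]; split; first by apply: filterS2 AB A_le => x ->.
move=> U U_nbhs; have [x [Ux ABx] Ax] := A_eq _ (filterI U_nbhs AB).
by exists x => //; rewrite -ABx.
Qed.

Lemma germ_generic_rank_eq_near {p q p' q'} (A : V -> 'M[R]_(p, q))
    (B : V -> 'M[R]_(p', q')) x0 r :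
  (\forall x \near x0, \rank (A x) = \rank (B x)) ->
  germ_generic_rank A x0 r <-> germ_generic_rank B x0 r.
Proof.
move=> AB; split; apply: germ_generic_rank_transfer => //.
by apply: filterS AB => x ->.
Qed.

Lemma germ_generic_rank_comp {p q} (A : V -> 'M[R]_(p, q)) (s t : V -> V) x0 r :
  cancel t s -> {for x0, continuous s} -> {for x0, continuous t} ->
  s x0 = x0 -> t x0 = x0 ->
  germ_generic_rank A x0 r <-> germ_generic_rank (A \o s) x0 r.
Proof.
move=> tK s_cont t_cont s_x0 t_x0.
have s_nbhs P : nbhs x0 P -> nbhs x0 (P \o s) by move: (s_cont P); rewrite s_x0.
have t_nbhs P : nbhs x0 P -> nbhs x0 (P \o t) by move: (t_cont P); rewrite t_x0.
split=> -[rank_le rank_eq]; split.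
- exact: (s_nbhs _ rank_le).
- move=> U /t_nbhs/rank_eq[x Utx rank_x]; exists (t x) => //=.
  by rewrite tK.
- by apply: filterS (t_nbhs _ rank_le) => x /=; rewrite tK.
- by move=> U /s_nbhs/rank_eq[x Usx rank_x]; exists (s x).
Qed.

End rank_germs.

Section column_shift.
Context {R : realType}.

Lemma continuous_colsub {p q q'} (c : 'I_q' -> 'I_q) :
  continuous (colsub c : 'M[R]_(p, q) -> 'M[R]_(p, q')).
Proof.
move=> Y; apply/(@cvgrPdist_lt _ _ _ (nbhs Y) (nbhs_filter Y)) => e e_gt0.
apply: filterS (nbhsx_ballx Y e e_gt0) => Z; rewrite -ball_normE /=.
apply: le_lt_trans; apply: mx_norm_le_entries => // i j.
by have := mx_norm_entry_le (Y - Z) i (c j); rewrite !mxE.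
Qed.

Lemma depends_only_on_delta {p q} {T : Type} (F : 'M[R]_(p, q) -> T) P j k :
  depends_only_on F P -> ~~ P j k ->
  forall Y (h : R), F (h *: delta_mx j k + Y) = F Y.
Proof.
move=> F_dep Pjk Y h; apply: F_dep => i l Pil; rewrite !mxE.
case: eqP => [eij|_]; case: eqP => [elk|_]; rewrite ?mulr0 ?add0r //.
by move: Pjk; rewrite -eij -elk Pil.
Qed.

Context {m L : nat}.

Definition yunshift (Z : 'M[R]_(m, L.+1)) : 'M[R]_(m, L.+1) :=
  \matrix_(j, k) Z j (if k == 0 :> nat then ord_max else inord k.-1).

Lemma val_inordS (k : 'I_L.+1) :
  val (inord k.+1 : 'I_L.+1) = if (k < L)%N then k.+1 else 0%N.
Proof.
case: ltnP => kL; first exact: inordK.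
by rewrite /inord /insubd insubF //= ltnS ltnNge kL.
Qed.

Lemma yunshiftK : cancel yunshift (@yshift R m L).
Proof.
move=> Z; apply/matrixP => j k; rewrite !mxE; congr (Z j _); apply/val_inj.
rewrite val_inordS; case: ltnP => kL /=; first by rewrite inordK //; lia.
by have := ltn_ord k; lia.
Qed.

Lemma yshift_linear (h : R) (A B : 'M[R]_(m, L.+1)) :
  yshift (h *: A + B) = h *: yshift A + yshift B.
Proof. by apply/matrixP => j k; rewrite !mxE. Qed.

Lemma yshift_delta j c : (0 < c <= L)%N ->
  yshift (delta_mx j (inord c)) = delta_mx j (inord c.-1) :> 'M[R]_(m, L.+1).
Proof.
move=> /andP[c_gt0 c_le]; apply/matrixP => i l; rewrite !mxE.
congr ((_ && _)%:R); rewrite -!val_eqE /= val_inordS !inordK; try lia.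
by case: ltnP => lL; apply/eqP/eqP; lia.
Qed.

Lemma jac_cols_yshift n (f : 'rV[R]_n -> 'rV[R]_m -> 'rV[R]_n)
    (Fx : 'M[R]_(m, L.+1) -> 'rV[R]_n) (Fu : 'M[R]_(m, L.+1) -> 'rV[R]_m)
    (cx cu : 'I_m -> 'I_L.+1) Y :
  (forall j, yshift (delta_mx j (cu j)) = delta_mx j (cx j) :> 'M[R]_(m, L.+1)) ->
  (forall j (h : R), Fx (h *: delta_mx j (cu j) + Y) = Fx Y) ->
  (\forall Z \near Y, Fx (yshift Z) = f (Fx Z) (Fu Z)) ->
  (forall v, derivable Fu Y v) -> differentiable (f (Fx Y)) (Fu Y) ->
  jac_cols Fx cx (yshift Y) = jac_u f (Fx Y) (Fu Y) *m jac_cols Fu cu Y.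
Proof.
move=> shift_cu Fx_cu dynamics dFu df; apply/matrixP => i j.
rewrite !mxE -shift_cu (derive_shift_dynamics yshift_linear dynamics (Fx_cu j)) //.
by rewrite jac_uE // !mxE; apply: eq_bigr => k _; rewrite !mxE mulrC.
Qed.

End column_shift.

Theorem proposition1 (R : realType) (n m : nat)
  (f : 'rV[R]_n -> 'rV[R]_m -> 'rV[R]_n)
  (r1 r2 : 'I_m -> nat)
  (Fx : 'M[R]_(m, (wlen r1 r2).+1) -> 'rV[R]_n)
  (Fu : 'M[R]_(m, (wlen r1 r2).+1) -> 'rV[R]_m)
  (x0 : 'rV[R]_n) (u0 : 'rV[R]_m) (y0 : 'rV[R]_m) :
  (* standing assumptions on the system x^+ = f(x,u) *)
  smooth (fun p : 'rV[R]_n * 'rV[R]_m => f p.1 p.2) ->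
  (forall x u, \rank (jac_u f x u) = m) ->
  (forall x u, \rank (row_mx (jac_x f x u) (jac_u f x u)) = n) ->
  (* equilibrium, and the flat parameterization around it *)
  f x0 u0 = x0 ->
  let Yeq : 'M[R]_(m, (wlen r1 r2).+1) := \matrix_(j, k) y0 0 j in
  Fx Yeq = x0 -> Fu Yeq = u0 ->
  smooth Fx -> smooth Fu ->
  (* x = F_x(y_[-R1, R2-1]) *)
  depends_only_on Fx
    (fun j k => (woff r1 - r1 j <= k)%N && (k < woff r1 + r2 j)%N) ->
  (* u = F_u(y_[-R1, R2]) *)
  depends_only_on Fu
    (fun j k => (woff r1 - r1 j <= k <= woff r1 + r2 j)%N) ->
  (* delta(F_x) = f(F_x, F_u) near the equilibrium *)
  (\forall Y \near Yeq, Fx (yshift Y) = f (Fx Y) (Fu Y)) ->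
  (* conclusion: d F_x / d y_[R2-1] and d F_u / d y_[R2] have the same generic rank *)
  forall r : nat,
    germ_generic_rank (jac_cols Fx (fun j => inord (woff r1 + r2 j).-1)) Yeq r <->
    germ_generic_rank (jac_cols Fu (fun j => inord (woff r1 + r2 j))) Yeq r.
Proof.
move=> f_smooth ju_full _ _ Yeq _ _ _ Fu_smooth Fx_dep _ dynamics r.
have col_range j : (0 < woff r1 + r2 j <= wlen r1 r2)%N.
  have r2_le : (r2 j <= \max_(i < m) r2 i)%N by rewrite (bigD1 j) //= leq_maxl.
  by rewrite /wlen /woff; lia.
have jacE : \forall Y \near Yeq,
    jac_cols Fx (fun j => inord (woff r1 + r2 j).-1) (yshift Y) =
    jac_u f (Fx Y) (Fu Y) *m jac_cols Fu (fun j => inord (woff r1 + r2 j)) Y.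
  apply: filterS (nbhs_interior dynamics) => Y dynamics_Y.
  apply: jac_cols_yshift dynamics_Y _ _ => [j|j h|v|].
  - exact: yshift_delta.
  - apply: depends_only_on_delta Fx_dep _ _ _.
    by rewrite inordK ?ltnn ?andbF // ltnS; case/andP: (col_range j).
  - exact: (Fu_smooth [::]).2.
  - exact: differentiable_smooth_section.
have shift_Yeq : yshift Yeq = Yeq by apply/matrixP => j k; rewrite !mxE.
have unshift_Yeq : yunshift Yeq = Yeq by apply/matrixP => j k; rewrite !mxE.
rewrite (germ_generic_rank_comp _ _ _ _ r yunshiftK (continuous_colsub _ Yeq)
  (continuous_colsub _ Yeq) shift_Yeq unshift_Yeq).
apply: germ_generic_rank_eq_near; apply: filterS jacE => Y /= ->.
exact: mxrankM_colfull (ju_full _ _).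
Qed.
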